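(* Let $(X,\le)$ be a partially ordered set, $(Y,\le)$ a dcpo and $j:X\to Y$ a map. The following are equivalent: (i) $(Y,j)$ is a directed completion of $X$; (ii) $j(X)$ is dense in $Y$ and for every $B\subset X$ such that $j(B)$ has a tip in $Y$, and every $a\in X$, we have $j(a)\in\widehat{j(B)}$ (closure in $Y$) if and only if $a\in\widehat B$ (closure in $X$).
   Context: Let $(X,\le)$ be a partially ordered set. A subset $D\subset X$ is directed if every finite subset of $D$ (including the empty one) has an upper bound in $D$; in particular directed sets are nonempty. $A\subset X$ is a lower set if $x\in A$ and $y\le x$ imply $y\in A$. $(X,\le)$ is a directed complete partial order (dcpo) if every directed subset has a supremum. A subset $A\subset X$ is directed-sup-closed if the supremum of every directed $D\subset A$ which has a supremum in $X$ belongs to $A$. For $A\subset X$, $\overline A$ is the smallest directed-sup-closed subset of $X$ containing $A$, and $\widehat A$ is the smallest subset of $X$ containing $A$ which is both a lower set and directed-sup-closed. $A$ is dense if $\overline A=X$. $A$ has a tip if $\overline A$ has a maximum. A map $T:X_1\to X_2$ between partially ordered sets has the Monotone Convergence Property (Mcp) if for every directed $D\subset X_1$ having a supremum, $T(D)$ has a supremum and $T(\sup D)=\sup T(D)$. A directed completion of $(X,\le)$ is a dcpo $(\overline X,\bar\le)$ together with a map $\iota:X\to\overline X$ with the Mcp such that for every dcpo $Z$ and every map $T:X\to Z$ with the Mcp there is a unique map $\bar T:\overline X\to Z$ with the Mcp satisfying $\bar T\circ\iota=T$. *)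

From Stdlib Require Import List.

Section Defs.
Context {T : Type} (le : T -> T -> Prop).

Definition is_partial_order : Prop :=
  (forall x, le x x) /\
  (forall x y, le x y -> le y x -> x = y) /\
  (forall x y z, le x y -> le y z -> le x z).

Definition subset (A B : T -> Prop) : Prop := forall x, A x -> B x.

(* every finite subset (given as a list, possibly empty) has an upper bound in D *)
Definition directed (D : T -> Prop) : Prop :=
  forall l : list T, (forall x, In x l -> D x) ->
    exists z, D z /\ (forall x, In x l -> le x z).

Definition is_upper_bound (A : T -> Prop) (u : T) : Prop :=
  forall x, A x -> le x u.

Definition is_sup (A : T -> Prop) (s : T) : Prop :=
  is_upper_bound A s /\ (forall u, is_upper_bound A u -> le s u).

Definition is_dcpo : Prop :=
  is_partial_order /\
  (forall D, directed D -> exists s, is_sup D s).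

Definition lower_set (A : T -> Prop) : Prop :=
  forall x y, A x -> le y x -> A y.

Definition dsup_closed (A : T -> Prop) : Prop :=
  forall D, subset D A -> directed D -> forall s, is_sup D s -> A s.

Definition dclosure (A : T -> Prop) : T -> Prop :=
  fun x => forall C, dsup_closed C -> subset A C -> C x.

(* \widehat A : smallest directed-sup-closed lower set containing A *)
Definition hat_closure (A : T -> Prop) : T -> Prop :=
  fun x => forall C, lower_set C -> dsup_closed C -> subset A C -> C x.

Definition dense (A : T -> Prop) : Prop := forall x, dclosure A x.

Definition has_tip (A : T -> Prop) : Prop :=
  exists m, dclosure A m /\ (forall y, dclosure A y -> le y m).

End Defs.

Definition image {A B : Type} (f : A -> B) (S : A -> Prop) : B -> Prop :=
  fun y => exists x, S x /\ f x = y.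

Definition Mcp {X1 X2 : Type} (le1 : X1 -> X1 -> Prop) (le2 : X2 -> X2 -> Prop)
  (T : X1 -> X2) : Prop :=
  forall D s, directed le1 D -> is_sup le1 D s -> is_sup le2 (image T D) (T s).

Definition directed_completion {X Y : Type} (leX : X -> X -> Prop)
  (leY : Y -> Y -> Prop) (iota : X -> Y) : Prop :=
  is_dcpo leY /\ Mcp leX leY iota /\
  forall (Z : Type) (leZ : Z -> Z -> Prop), is_dcpo leZ ->
  forall T : X -> Z, Mcp leX leZ T ->
    exists Tb : Y -> Z, (Mcp leY leZ Tb /\ forall x, Tb (iota x) = T x) /\
      forall Tb' : Y -> Z, Mcp leY leZ Tb' -> (forall x, Tb' (iota x) = T x) ->
        forall y, Tb' y = Tb y.

(* (i) -> (ii): the closure of j(X) is itself a dcpo; extending the corestriction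
   of j to it and including back gives an Mcp endomap of Y fixing j, which by
   uniqueness is the identity, so j(X) is dense.  A lower directed-sup-closed set
   is the preimage of False under an Mcp map into propositions ordered by
   implication (its complement indicator); extending that map along j shows that
   j reflects hat closures, and every Mcp map preserves them.
   (ii) -> (i): (ii) forces j to be monotone and then Mcp, since the hat closure
   of a set with a tip is the principal ideal of the tip.  Given an Mcp map T, the
   extension sends the tip of j(B) to the tip of T(B); reflection of hat closures
   makes this relation monotone, hence functional, density makes it total, and
   two Mcp maps agreeing on a dense set agree everywhere. *)

From Stdlib Require Import List Classical ClassicalEpsilon ProofIrrelevance PropExtensionality.
From Stdlib Require Import Program.Basics.

Definition is_tip {T : Type} (le : T -> T -> Prop) (A : T -> Prop) (m : T) : Prop :=
  dclosure le A m /\ (forall y, dclosure le A y -> le y m).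

Definition rel_image {A B : Type} (R : A -> B -> Prop) (D : A -> Prop) : B -> Prop :=
  fun z => exists d, D d /\ R d z.

Section Closures.
Context {T : Type} (le : T -> T -> Prop).

Lemma dclosure_incl A : subset A (dclosure le A).
Proof. intros x Ax C _ HAC; auto. Qed.

Lemma dclosure_dsup_closed A : dsup_closed le (dclosure le A).
Proof.
  intros D HDA Hdir s Hs C HC HAC.
  apply (HC D); auto. intros x Dx; apply HDA; auto.
Qed.

Lemma dclosure_least A C : dsup_closed le C -> subset A C -> subset (dclosure le A) C.
Proof. intros HC HAC x Hx; apply Hx; auto. Qed.

Lemma dclosure_monotone A A' : subset A A' -> subset (dclosure le A) (dclosure le A').
Proof.
  intros HAA'. apply dclosure_least; [apply dclosure_dsup_closed |].
  intros x Ax; apply dclosure_incl; auto.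
Qed.

Lemma hat_closure_incl A : subset A (hat_closure le A).
Proof. intros x Ax C _ _ HAC; auto. Qed.

Lemma hat_closure_dsup_closed A : dsup_closed le (hat_closure le A).
Proof.
  intros D HDA Hdir s Hs C HL HC HAC.
  apply (HC D); auto. intros x Dx; apply HDA; auto.
Qed.

Lemma hat_closure_lower A : lower_set le (hat_closure le A).
Proof. intros x y Hx Hyx C HL HC HAC. apply (HL x y); [apply Hx |]; auto. Qed.

Lemma dclosure_hat_closure A : subset (dclosure le A) (hat_closure le A).
Proof. apply dclosure_least; [apply hat_closure_dsup_closed | apply hat_closure_incl]. Qed.

Lemma down_dsup_closed m : dsup_closed le (fun y => le y m).
Proof. intros D HD _ s [_ Hleast]. apply Hleast. intros x Dx; apply HD; auto. Qed.

Hypothesis le_trans : forall x y z, le x y -> le y z -> le x z.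

Lemma down_lower m : lower_set le (fun y => le y m).
Proof. intros x y Hx Hyx; eauto. Qed.

Lemma hat_closure_tip A m : is_tip le A m -> forall y, hat_closure le A y <-> le y m.
Proof.
  intros [Hm Hmax] y. split.
  - intros Hy. apply Hy; [apply down_lower | apply down_dsup_closed |].
    intros a Aa. apply Hmax, dclosure_incl; auto.
  - intros Hym. apply (hat_closure_lower A m); auto. apply dclosure_hat_closure; auto.
Qed.

Lemma is_tip_max A m : A m -> is_upper_bound le A m -> is_tip le A m.
Proof.
  intros Am Hub. split; [apply dclosure_incl; auto |].
  apply dclosure_least; [apply down_dsup_closed | exact Hub].
Qed.

Lemma is_tip_sup D s A : directed le D -> is_sup le D s ->
  subset D (dclosure le A) -> (forall a, A a -> exists d, D d /\ le a d) ->
  is_tip le A s.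
Proof.
  intros Hdir [Hub Hleast] HD HA. split.
  - apply (dclosure_dsup_closed A D); auto. split; auto.
  - apply dclosure_least; [apply down_dsup_closed |].
    intros a Aa. destruct (HA a Aa) as [d [Dd Had]]. eauto.
Qed.

Lemma directed_rel_image {U : Type} (leU : U -> U -> Prop) (R : U -> T -> Prop) D :
  (forall d d' z z', leU d d' -> R d z -> R d' z' -> le z z') ->
  directed leU D -> (forall d, D d -> exists z, R d z) ->
  directed le (rel_image R D).
Proof.
  intros Hmono Hdir Htot l. induction l as [|a l IH]; intros Hl.
  - destruct (Hdir nil) as [d [Dd _]]; [intros x [] |].
    destruct (Htot d Dd) as [z Rdz].
    exists z. split; [exists d; auto | intros x []].
  - destruct (Hl a (or_introl eq_refl)) as [e [De Rea]].
    destruct IH as [z [[d [Dd Rdz]] Hz]]; [intros x Hx; apply Hl; right; auto |].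
    destruct (Hdir (e :: d :: nil)) as [w [Dw Hw]]; [intros x [<-|[<-|[]]]; auto |].
    destruct (Htot w Dw) as [zw Rwz].
    exists zw. split; [exists w; auto |].
    intros x [<-|Hx].
    + apply (Hmono e w); auto. apply Hw; left; auto.
    + apply le_trans with z; auto. apply (Hmono d w); auto. apply Hw; right; left; auto.
Qed.

End Closures.

Lemma is_sup_ext {T : Type} (le : T -> T -> Prop) A A' s :
  (forall x, A x <-> A' x) -> is_sup le A s -> is_sup le A' s.
Proof.
  intros E [Hub Hleast]. split.
  - intros x Hx; apply Hub, E; auto.
  - intros u Hu; apply Hleast. intros x Hx; apply Hu, E; auto.
Qed.

Lemma is_sup_unique {T : Type} (le : T -> T -> Prop) A s s' :
  (forall x y, le x y -> le y x -> x = y) -> is_sup le A s -> is_sup le A s' -> s = s'.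
Proof. intros Hanti [Hub Hleast] [Hub' Hleast']. apply Hanti; auto. Qed.
Section MonotoneConvergence.
Context {X1 X2 : Type} (le1 : X1 -> X1 -> Prop) (le2 : X2 -> X2 -> Prop).
Hypothesis le1_refl : forall x, le1 x x.

Lemma Mcp_monotone f : Mcp le1 le2 f -> forall x y, le1 x y -> le2 (f x) (f y).
Proof.
  intros Hf x y Hxy.
  set (D := fun z => z = x \/ z = y).
  assert (HD : directed le1 D).
  { intros l Hl. exists y. split; [right; auto |].
    intros z Hz. destruct (Hl z Hz) as [-> | ->]; auto. }
  assert (Hsup : is_sup le1 D y).
  { split; [intros z [-> | ->]; auto | intros u Hu; apply Hu; right; auto]. }
  apply (proj1 (Hf D y HD Hsup)). exists x. split; [left |]; auto.
Qed.

Hypothesis le2_trans : forall x y z, le2 x y -> le2 y z -> le2 x z.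

Lemma directed_image f D : Mcp le1 le2 f -> directed le1 D -> directed le2 (image f D).
Proof.
  intros Hf Hdir. apply (directed_rel_image le2 le2_trans le1); auto.
  - intros d d' z z' Hdd' <- <-. apply (Mcp_monotone f); auto.
  - intros d _. exists (f d); auto.
Qed.

Lemma lower_set_preimage f C : Mcp le1 le2 f -> lower_set le2 C ->
  lower_set le1 (fun x => C (f x)).
Proof. intros Hf HC x y Hx Hyx. apply (HC (f x)); auto. apply (Mcp_monotone f); auto. Qed.

Lemma dsup_closed_preimage f C : Mcp le1 le2 f -> dsup_closed le2 C ->
  dsup_closed le1 (fun x => C (f x)).
Proof.
  intros Hf HC D HD Hdir s Hs. apply (HC (image f D)).
  - intros y [d [Dd <-]]. apply HD; auto.
  - apply directed_image; auto.
  - apply Hf; auto.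
Qed.

Lemma Mcp_hat_closure f B b : Mcp le1 le2 f ->
  hat_closure le1 B b -> hat_closure le2 (image f B) (f b).
Proof.
  intros Hf Hb. apply Hb.
  - apply lower_set_preimage; [exact Hf | apply hat_closure_lower].
  - apply dsup_closed_preimage; [exact Hf | apply hat_closure_dsup_closed].
  - intros x Bx. apply hat_closure_incl. exists x; auto.
Qed.

Lemma Mcp_comp {X3 : Type} (le3 : X3 -> X3 -> Prop) f g :
  Mcp le1 le2 f -> Mcp le2 le3 g -> Mcp le1 le3 (fun x => g (f x)).
Proof.
  intros Hf Hg D s Hdir Hs.
  apply (is_sup_ext le3 (image g (image f D))).
  - intros z. split.
    + intros [y [[x [Dx <-]] <-]]. exists x; auto.
    + intros [x [Dx <-]]. exists (f x). split; [exists x |]; auto.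
  - apply Hg; [apply directed_image | apply Hf]; auto.
Qed.

End MonotoneConvergence.

Lemma Mcp_id {T : Type} (le : T -> T -> Prop) : Mcp le le (fun y => y).
Proof.
  intros D s _. apply is_sup_ext.
  intros x; split; [intros Dx; exists x; auto | intros [d [Dd <-]]; auto].
Qed.

Lemma Mcp_eq_on_dense {Y Z : Type} (leY : Y -> Y -> Prop) (leZ : Z -> Z -> Prop) A f g :
  (forall x y, leZ x y -> leZ y x -> x = y) ->
  dense leY A -> Mcp leY leZ f -> Mcp leY leZ g -> (forall a, A a -> f a = g a) ->
  forall y, f y = g y.
Proof.
  intros Hanti Hdense Hf Hg HA y. apply (Hdense y (fun y => f y = g y)); [| exact HA].
  intros D HD Hdir s Hs. apply (is_sup_unique leZ (image f D)); auto.
  apply (is_sup_ext leZ (image g D)); [| apply Hg; auto].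
  intros z; split; intros [d [Dd <-]]; exists d; split; auto; rewrite (HD d Dd); auto.
Qed.

Lemma impl_dcpo : is_dcpo impl.
Proof.
  split; [split; [| split] |].
  - intros P HP; exact HP.
  - intros P Q HPQ HQP. apply propositional_extensionality; split; auto.
  - intros P Q R HPQ HQR HP; auto.
  - intros D _. exists (exists P, D P /\ P). split.
    + intros P DP HP. exists P; auto.
    + intros u Hu [P [DP HP]]. exact (Hu P DP HP).
Qed.

Lemma not_lower_set : lower_set impl not.
Proof. intros P Q HnP HQP HQ. auto. Qed.

Lemma not_dsup_closed : dsup_closed impl not.
Proof. intros D HD _ s [_ Hleast]. apply (Hleast False). intros P DP. apply HD; auto. Qed.

Lemma Mcp_not_in {T : Type} (le : T -> T -> Prop) C :
  lower_set le C -> dsup_closed le C -> Mcp le impl (fun x => ~ C x).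
Proof.
  intros HL HC D s Hdir [Hub Hleast]. split.
  - intros P [d [Dd <-]] HnCd HCs. apply HnCd, (HL s); auto.
  - intros u Hu HnCs. apply NNPP. intros Hnu. apply HnCs, (HC D); auto; [| split; auto].
    intros d Dd. apply NNPP. intros HnCd. apply Hnu, (Hu (~ C d)); auto. exists d; auto.
Qed.

Section SubDcpo.
Context {Y : Type} (le : Y -> Y -> Prop) (C : Y -> Prop).
Hypothesis le_dcpo : is_dcpo le.
Hypothesis C_dsup_closed : dsup_closed le C.

Definition sub_le (a b : {y | C y}) : Prop := le (proj1_sig a) (proj1_sig b).

Lemma directed_proj1_sig D : directed sub_le D -> directed le (image (@proj1_sig _ C) D).
Proof.
  destruct le_dcpo as [[_ [_ le_trans]] _]. intros Hdir.
  apply (directed_rel_image le le_trans sub_le); auto.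
  - intros d d' z z' Hdd' <- <-; exact Hdd'.
  - intros d _. exists (proj1_sig d); auto.
Qed.

Lemma sub_sup D : directed sub_le D ->
  exists s, is_sup sub_le D s /\ is_sup le (image (@proj1_sig _ C) D) (proj1_sig s).
Proof.
  intros Hdir. pose proof (directed_proj1_sig D Hdir) as Hdir'.
  destruct (proj2 le_dcpo _ Hdir') as [t Ht].
  assert (HimC : subset (image (@proj1_sig _ C) D) C)
    by (intros y [d [_ <-]]; apply proj2_sig).
  assert (Ct : C t) by exact (C_dsup_closed _ HimC Hdir' t Ht).
  exists (exist C t Ct). split; [| exact Ht].
  destruct Ht as [Hub Hleast]. split.
  - intros d Dd. apply Hub. exists d; auto.
  - intros u Hu. apply Hleast. intros y [d [Dd <-]]. apply Hu; auto.
Qed.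

Lemma sub_dcpo : is_dcpo sub_le.
Proof.
  destruct le_dcpo as [[le_refl [le_anti le_trans]] _].
  split; [split; [| split] |].
  - intros x; apply le_refl.
  - intros [x Cx] [y Cy] Hxy Hyx. apply subset_eq_compat, le_anti; auto.
  - intros x y z; apply le_trans.
  - intros D Hdir. destruct (sub_sup D Hdir) as [s [Hs _]]. exists s; exact Hs.
Qed.

Lemma Mcp_proj1_sig : Mcp sub_le le (@proj1_sig _ C).
Proof.
  intros D s Hdir Hs. destruct (sub_sup D Hdir) as [s' [Hs' Hsup]].
  rewrite (is_sup_unique sub_le D s s'); auto. apply sub_dcpo.
Qed.

Lemma Mcp_corestriction {X : Type} (leX : X -> X -> Prop) (g : X -> {y | C y}) :
  Mcp leX le (fun x => proj1_sig (g x)) -> Mcp leX sub_le g.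
Proof.
  intros Hg D s Hdir Hs. destruct (Hg D s Hdir Hs) as [Hub Hleast]. split.
  - intros y [d [Dd <-]]. apply Hub. exists d; auto.
  - intros u Hu. apply Hleast. intros y [d [Dd <-]]. apply (Hu (g d)). exists d; auto.
Qed.

End SubDcpo.

Section CompletionProperties.
Context {X Y : Type} (leX : X -> X -> Prop) (leY : Y -> Y -> Prop) (j : X -> Y).
Hypothesis j_completion : directed_completion leX leY j.

Lemma directed_completion_dense : dense leY (image j (fun _ => True)).
Proof.
  destruct j_completion as [HY [Hj Hext]].
  pose proof HY as [[le_refl [_ le_trans]] _].
  set (C := dclosure leY (image j (fun _ => True))).
  assert (HC : dsup_closed leY C) by apply dclosure_dsup_closed.
  assert (jC : forall x, C (j x)) by (intros x; apply dclosure_incl; exists x; auto).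
  set (j' := fun x => exist C (j x) (jC x)).
  destruct (Hext _ _ (sub_dcpo leY C HY HC) j' (Mcp_corestriction leY C leX j' Hj))
    as [E [[HE HEj] _]].
  destruct (Hext Y leY HY j Hj) as [J [_ J_unique]].
  assert (Hproj : forall y, proj1_sig (E y) = J y).
  { apply J_unique.
    - apply (Mcp_comp leY (sub_le leY C)); auto; [intros ? ? ?; apply le_trans |].
      apply Mcp_proj1_sig; auto.
    - intros x. rewrite HEj. reflexivity. }
  assert (Hid : forall y, y = J y) by (apply (J_unique (fun y => y)); [apply Mcp_id | reflexivity]).
  intros y. rewrite Hid, <- Hproj. apply proj2_sig.
Qed.

Lemma directed_completion_reflects_hat_closure B a :
  hat_closure leY (image j B) (j a) -> hat_closure leX B a.
Proof.
  destruct j_completion as [HY [_ Hext]].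
  pose proof HY as [[le_refl _] _].
  intros Ha.
  destruct (Hext Prop impl impl_dcpo _
              (Mcp_not_in leX _ (hat_closure_lower leX B) (hat_closure_dsup_closed leX B)))
    as [E [[HE HEj] _]].
  apply NNPP. rewrite <- HEj.
  apply Ha.
  - apply (lower_set_preimage leY impl); auto. apply not_lower_set.
  - apply (dsup_closed_preimage leY impl); auto.
    + intros P Q R HPQ HQR HP; auto.
    + apply not_dsup_closed.
  - intros y [b [Bb <-]]. rewrite HEj. intros Hnb. apply Hnb, hat_closure_incl; auto.
Qed.

End CompletionProperties.

Lemma Mcp_of_preserves_hat_closure {X Y : Type} (leX : X -> X -> Prop)
  (leY : Y -> Y -> Prop) (j : X -> Y) :
  is_dcpo leY ->
  (forall B, has_tip leY (image j B) ->
     forall a, hat_closure leX B a -> hat_closure leY (image j B) (j a)) ->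
  Mcp leX leY j.
Proof.
  intros [[le_refl [_ le_trans]] Hsup] Hhat.
  assert (Hmono : forall x y, leX x y -> leY (j x) (j y)).
  { intros x y Hxy.
    assert (Htip : is_tip leY (image j (fun b => b = y)) (j y)).
    { apply is_tip_max; auto; [exists y; auto |]. intros w [b [-> <-]]; auto. }
    apply (proj1 (hat_closure_tip leY le_trans _ _ Htip (j x))).
    apply Hhat; [exists (j y); exact Htip |].
    apply (hat_closure_lower leX _ y); auto. apply hat_closure_incl; auto. }
  intros D s Hdir Hs.
  assert (Hdir' : directed leY (image j D)).
  { apply (directed_rel_image leY le_trans leX); auto.
    - intros d d' z z' Hdd' <- <-; auto.
    - intros d _; exists (j d); auto. }
  destruct (Hsup _ Hdir') as [t Ht].
  assert (Htip : is_tip leY (image j D) t).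
  { apply (is_tip_sup leY le_trans (image j D)); auto.
    - apply dclosure_incl.
    - intros y Hy; exists y; auto. }
  assert (Hst : leY (j s) t).
  { apply (proj1 (hat_closure_tip leY le_trans _ _ Htip (j s))).
    apply Hhat; [exists t; exact Htip |].
    apply (hat_closure_dsup_closed leX D D); auto. apply hat_closure_incl. }
  split.
  - intros y [d [Dd <-]]. apply Hmono, (proj1 Hs); auto.
  - intros u Hu. apply le_trans with t; auto. apply (proj2 Ht); auto.
Qed.

Section Extension.
Context {X Y Z : Type} (leX : X -> X -> Prop) (leY : Y -> Y -> Prop) (leZ : Z -> Z -> Prop).
Context (j : X -> Y) (T : X -> Z).
Hypothesis leX_order : is_partial_order leX.
Hypothesis leY_dcpo : is_dcpo leY.
Hypothesis leZ_dcpo : is_dcpo leZ.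
Hypothesis T_Mcp : Mcp leX leZ T.
Hypothesis j_dense : dense leY (image j (fun _ => True)).
Hypothesis j_reflects_hat_closure : forall B, has_tip leY (image j B) ->
  forall a, hat_closure leY (image j B) (j a) -> hat_closure leX B a.

Let leX_refl : forall x, leX x x := proj1 leX_order.
Let leY_refl : forall y, leY y y := proj1 (proj1 leY_dcpo).
Let leY_trans : forall x y z, leY x y -> leY y z -> leY x z :=
  proj2 (proj2 (proj1 leY_dcpo)).
Let leZ_refl : forall z, leZ z z := proj1 (proj1 leZ_dcpo).
Let leZ_anti : forall x y, leZ x y -> leZ y x -> x = y := proj1 (proj2 (proj1 leZ_dcpo)).
Let leZ_trans : forall x y z, leZ x y -> leZ y z -> leZ x z :=
  proj2 (proj2 (proj1 leZ_dcpo)).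

Definition common_tip (y : Y) (z : Z) : Prop :=
  exists B, is_tip leY (image j B) y /\ is_tip leZ (image T B) z.

Lemma common_tip_monotone y y' z z' :
  leY y y' -> common_tip y z -> common_tip y' z' -> leZ z z'.
Proof.
  intros Hyy' [B [HjB HTB]] [B' [HjB' HTB']].
  apply (proj1 HTB (fun w => leZ w z')); [apply down_dsup_closed |].
  intros w [b [Bb <-]].
  assert (Hb : hat_closure leX B' b).
  { apply j_reflects_hat_closure; [exists y'; exact HjB' |].
    apply (proj2 (hat_closure_tip leY leY_trans _ _ HjB' (j b))).
    apply leY_trans with y; auto. apply (proj2 HjB), dclosure_incl. exists b; auto. }
  apply (proj1 (hat_closure_tip leZ leZ_trans _ _ HTB' (T b))).
  apply (Mcp_hat_closure leX); auto.
Qed.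

Lemma common_tip_functional y z z' : common_tip y z -> common_tip y z' -> z = z'.
Proof. intros Hz Hz'. apply leZ_anti; apply (common_tip_monotone y y); auto. Qed.

Lemma common_tip_j x : common_tip (j x) (T x).
Proof.
  exists (fun b => b = x). split; apply is_tip_max; auto;
    solve [exists x; auto | intros w [b [-> <-]]; auto].
Qed.

Lemma directed_common_tip D : directed leY D -> (forall d, D d -> exists z, common_tip d z) ->
  directed leZ (rel_image common_tip D).
Proof. apply directed_rel_image; [exact leZ_trans | exact common_tip_monotone]. Qed.

(* The witness for the supremum is the union of witnesses for the elements of [D]. *)
Lemma common_tip_sup D s zs : directed leY D -> (forall d, D d -> exists z, common_tip d z) ->
  is_sup leY D s -> is_sup leZ (rel_image common_tip D) zs -> common_tip s zs.
Proof.
  intros Hdir Htot Hs Hzs.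
  exists (fun x => exists d z B, D d /\ is_tip leY (image j B) d /\
                                  is_tip leZ (image T B) z /\ B x).
  split.
  - apply (is_tip_sup leY leY_trans D); auto.
    + intros d Dd. destruct (Htot d Dd) as [z [B [HjB HTB]]].
      apply (dclosure_monotone leY (image j B)); [| apply HjB].
      intros w [x [Bx <-]]. exists x. split; auto. exists d, z, B; auto.
    + intros w [x [[d [z [B [Dd [HjB [_ Bx]]]]]] <-]].
      exists d. split; auto. apply (proj2 HjB), dclosure_incl. exists x; auto.
  - apply (is_tip_sup leZ leZ_trans (rel_image common_tip D)); auto.
    + apply directed_common_tip; auto.
    + intros z [d [Dd [B [HjB HTB]]]].
      apply (dclosure_monotone leZ (image T B)); [| apply HTB].
      intros w [x [Bx <-]]. exists x. split; auto. exists d, z, B; auto.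
    + intros w [x [[d [z [B [Dd [HjB [HTB Bx]]]]]] <-]].
      exists z. split; [exists d; split; [| exists B]; auto |].
      apply (proj2 HTB), dclosure_incl. exists x; auto.
Qed.

Lemma common_tip_total y : exists z, common_tip y z.
Proof.
  apply (j_dense y (fun y => exists z, common_tip y z)).
  - intros D HD Hdir s Hs.
    destruct (proj2 leZ_dcpo _ (directed_common_tip D Hdir HD)) as [zs Hzs].
    exists zs. apply (common_tip_sup D); auto.
  - intros w [x [_ <-]]. exists (T x). apply common_tip_j.
Qed.

Definition extension (y : Y) : Z :=
  proj1_sig (constructive_indefinite_description _ (common_tip_total y)).

Lemma extension_spec y : common_tip y (extension y).
Proof. unfold extension. destruct constructive_indefinite_description; auto. Qed.

Lemma extension_j x : extension (j x) = T x.
Proof. apply (common_tip_functional (j x)); [apply extension_spec | apply common_tip_j]. Qed.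

Lemma Mcp_extension : Mcp leY leZ extension.
Proof.
  intros D s Hdir Hs.
  assert (Htot : forall d, D d -> exists z, common_tip d z) by (intros; apply common_tip_total).
  destruct (proj2 leZ_dcpo _ (directed_common_tip D Hdir Htot)) as [zs Hzs].
  rewrite (common_tip_functional s (extension s) zs);
    [| apply extension_spec | apply (common_tip_sup D); auto].
  apply (is_sup_ext leZ (rel_image common_tip D)); auto.
  intros z. split.
  - intros [d [Dd Hdz]]. exists d. split; auto.
    apply (common_tip_functional d); auto. apply extension_spec.
  - intros [d [Dd <-]]. exists d. split; auto. apply extension_spec.
Qed.

End Extension.

Theorem mainTheorem3 (X : Type) (leX : X -> X -> Prop) (HX : is_partial_order leX)
  (Y : Type) (leY : Y -> Y -> Prop) (HY : is_dcpo leY) (j : X -> Y) :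
  directed_completion leX leY j <->
  (dense leY (image j (fun _ => True)) /\
   forall B : X -> Prop, has_tip leY (image j B) ->
     forall a : X, hat_closure leY (image j B) (j a) <-> hat_closure leX B a).
Proof.
  split.
  - intros Hj. split; [apply (directed_completion_dense leX), Hj |].
    intros B _ a. split; [apply (directed_completion_reflects_hat_closure leX leY j Hj) |].
    apply (Mcp_hat_closure leX leY (proj1 HX)); [apply HY | apply Hj].
  - intros [Hdense Hhat].
    pose proof (fun B HB a => proj1 (Hhat B HB a)) as Hreflect.
    pose proof (fun B HB a => proj2 (Hhat B HB a)) as Hpreserve.
    pose proof (Mcp_of_preserves_hat_closure leX leY j HY Hpreserve) as Hj.
    split; [exact HY | split; [exact Hj |]].
    intros Z leZ HZ T HT.
    exists (extension leX leY leZ j T HX HY HZ HT Hdense Hreflect).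
    split; [split; [apply Mcp_extension | apply extension_j] |].
    intros E HE HEj. apply (Mcp_eq_on_dense leY leZ (image j (fun _ => True))); auto.
    + apply HZ.
    + apply Mcp_extension.
    + intros y [x [_ <-]]. rewrite HEj, extension_j; reflexivity.
Qed.
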